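(* Assume $\mathscr{R}_0>\frac{\sigma_m(\mu+r)C_I}{\mu\beta}$ (equivalently $C_I<\frac{\beta A}{(\mu+r)(\mu+\beta+\rho)}$) and $$\frac{\beta^2\sigma_s}{(\mu+r)\sigma_m^2}\le C_I.$$ Then $E^*$ is the unique endemic equilibrium of (3) if $1<\mathscr{R}_0\le 1+\frac{\sigma_m(\mu+r)}{\mu\beta}C_I$, and $E_1^*$ is the unique endemic equilibrium of (3) if $\mathscr{R}_0>1+\frac{\sigma_m(\mu+r)}{\mu\beta}C_I$.
   Context: Let $A,\sigma_m,\sigma_s,\mu,\rho,\beta,r,C_I$ be positive constants. Write $[x]^+=\max\{0,x\}$ and $T(I_s)=rI_s$ if $I_s<C_I$, $T(I_s)=rC_I$ if $I_s\ge C_I$. System (3) is $$S'=A-\sigma_mSI_m-\sigma_sS[I_s-C_I]^+-\mu S,\quad I_m'=\sigma_mSI_m+\sigma_sS[I_s-C_I]^+-(\mu+\rho+\beta)I_m,\quad I_s'=\beta I_m-T(I_s)-\mu I_s.$$ $\mathscr{R}_0=\frac{A\sigma_m}{\mu(\mu+\beta+\rho)}$. An endemic equilibrium is an equilibrium of (3) with $S,I_m,I_s>0$. $E^*=(S^*,I_m^*,I_s^* )$ with $S^*=\frac{\mu+\beta+\rho}{\sigma_m}$, $I_m^*=\frac{\mu(\mathscr{R}_0-1)}{\sigma_m}$, $I_s^*=\frac{\mu\beta(\mathscr{R}_0-1)}{\sigma_m(\mu+r)}$. Let $p=\frac{(\mu+r)\sigma_m\sigma_sC_I}{\mu(\mu\sigma_m+\beta\sigma_s)}$,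 $q=\frac{\mu\sigma_m}{\mu\sigma_m+\beta\sigma_s}$, and $S_{1,2}^*=\frac{\mu+\beta+\rho}{2\sigma_m}\big\{\mathscr{R}_0-p+q\mp\sqrt{(\mathscr{R}_0-p-q)^2-4pq}\big\}$ (minus sign for $S_1^*$, plus for $S_2^*$), $I_{m_i}^*=\frac{\mu\mathscr{R}_0}{\sigma_m}-\frac{\mu S_i^*}{\mu+\beta+\rho}$, $I_{s_i}^*=\frac{\beta\mathscr{R}_0}{\sigma_m}-\frac{\beta S_i^*}{\mu+\beta+\rho}-\frac{rC_I}{\mu}$, $E_i^*=(S_i^*,I_{m_i}^*,I_{s_i}^* )$, $i=1,2$ (these are the candidate equilibria in the region $I_s>C_I$). ''$E_i^*$ exists'' / ''$E_i^*$ is an endemic equilibrium'' means $S_i^*$ is real, $S_i^*>0$, $I_{m_i}^*>0$ and $I_{s_i}^*>C_I$; ''$E^*$ exists'' means $E^*$ is an endemic equilibrium. *)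

From Stdlib Require Import Reals Lra.
Open Scope R_scope.

Definition pos_part (x : R) : R := Rmax 0 x.

Definition Ttreat (r CI Is : R) : R :=
  if Rlt_dec Is CI then r * Is else r * CI.

Definition rhs_S (A sm ss mu CI S Im Is : R) : R :=
  A - sm * S * Im - ss * S * pos_part (Is - CI) - mu * S.
Definition rhs_Im (sm ss mu rho beta CI S Im Is : R) : R :=
  sm * S * Im + ss * S * pos_part (Is - CI) - (mu + rho + beta) * Im.
Definition rhs_Is (mu beta r CI Im Is : R) : R :=
  beta * Im - Ttreat r CI Is - mu * Is.

Definition endemic_eq (A sm ss mu rho beta r CI : R) (E : R * R * R) : Prop :=
  let '(Sv, Im, Is) := E in
  0 < Sv /\ 0 < Im /\ 0 < Is /\
  rhs_S A sm ss mu CI Sv Im Is = 0 /\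
  rhs_Im sm ss mu rho beta CI Sv Im Is = 0 /\
  rhs_Is mu beta r CI Im Is = 0.

Definition Rzero (A sm mu rho beta : R) : R := A * sm / (mu * (mu + beta + rho)).

Definition Estar (A sm mu rho beta r : R) : R * R * R :=
  ((mu + beta + rho) / sm,
   mu * (Rzero A sm mu rho beta - 1) / sm,
   mu * beta * (Rzero A sm mu rho beta - 1) / (sm * (mu + r))).

Definition pp (sm ss mu beta r CI : R) : R :=
  (mu + r) * sm * ss * CI / (mu * (mu * sm + beta * ss)).
Definition qq (sm ss mu beta : R) : R := mu * sm / (mu * sm + beta * ss).

Definition discS (A sm ss mu rho beta r CI : R) : R :=
  (Rzero A sm mu rho beta - pp sm ss mu beta r CI - qq sm ss mu beta) ^ 2
  - 4 * pp sm ss mu beta r CI * qq sm ss mu beta.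

Definition S1star (A sm ss mu rho beta r CI : R) : R :=
  (mu + beta + rho) / (2 * sm) *
  (Rzero A sm mu rho beta - pp sm ss mu beta r CI + qq sm ss mu beta
   - sqrt (discS A sm ss mu rho beta r CI)).

Definition E1star (A sm ss mu rho beta r CI : R) : R * R * R :=
  let S1 := S1star A sm ss mu rho beta r CI in
  (S1,
   mu * Rzero A sm mu rho beta / sm - mu * S1 / (mu + beta + rho),
   beta * Rzero A sm mu rho beta / sm - beta * S1 / (mu + beta + rho) - r * CI / mu).

From Stdlib Require Import Reals Lra Psatz.
Open Scope R_scope.

(* Below the saturation level C_I the I_m-equation forces sigma_m S = mu + beta + rho, and the
   remaining equations are linear and give E^*.
   Above it, substituting t = R0 - sigma_m S / (mu + beta + rho) parametrises S, I_m, I_s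
   affinely by t, and the I_m-equation becomes the monic quadratic
   t^2 - (R0 + p - q) t + p R0 = 0, with the saturation constraint I_s >= C_I reading t >= c
   for c = sigma_m (mu + r) C_I / (mu beta), and p = c (1 - q).  The value of the quadratic
   at c is c q (c + 1 - R0).  If R0 > 1 + c it is negative, so exactly the larger root lies
   beyond c, and this root gives E_1^*.  If R0 <= 1 + c it is nonnegative, and the hypothesis
   on C_I, which reads q (1 + c) >= 1, puts the vertex left of c, so no root exceeds c. *)

Definition quad (b d t : R) : R := t ^ 2 - b * t + d.

Definition quad_root_max (b d : R) : R := (b + sqrt (b ^ 2 - 4 * d)) / 2.

Lemma quad_sub b d t u : quad b d t - quad b d u = (t - u) * (t + u - b).
Proof. unfold quad; ring. Qed.

Lemma quad_discr b d t : 4 * quad b d t = (2 * t - b) ^ 2 - (b ^ 2 - 4 * d).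
Proof. unfold quad; ring. Qed.

Lemma quad_discr_pos b d c : quad b d c < 0 -> 0 < b ^ 2 - 4 * d.
Proof.
  intros Hc.
  pose proof (quad_discr b d c); pose proof (pow2_ge_0 (2 * c - b)); lra.
Qed.

Lemma quad_root_max_root b d : 0 <= b ^ 2 - 4 * d -> quad b d (quad_root_max b d) = 0.
Proof.
  intros HD; pose proof (sqrt_sqrt _ HD).
  unfold quad, quad_root_max; nra.
Qed.

Lemma quad_root_le b d c t :
  b <= 2 * c -> 0 <= quad b d c -> quad b d t = 0 -> t <= c.
Proof.
  intros Hb Hc Ht; apply Rnot_lt_le; intros Hct.
  pose proof (quad_sub b d t c).
  assert (0 < (t - c) * (t + c - b)) by (apply Rmult_lt_0_compat; lra).
  lra.
Qed.

Lemma quad_root_ge_eq_max b d c t :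
  quad b d c < 0 -> quad b d t = 0 -> c <= t -> t = quad_root_max b d.
Proof.
  intros Hc Ht Hct.
  pose proof (quad_sub b d t c).
  assert (Hv : 0 <= 2 * t - b) by nra.
  assert (HD : b ^ 2 - 4 * d = (2 * t - b) ^ 2) by (pose proof (quad_discr b d t); lra).
  unfold quad_root_max; rewrite HD, sqrt_pow2 by exact Hv; field.
Qed.

Lemma quad_root_max_between b d c u :
  c < u -> quad b d c < 0 -> 0 < quad b d u -> c < quad_root_max b d < u.
Proof.
  intros Hcu Hc Hu.
  pose proof (quad_discr_pos b d c Hc) as HD.
  assert (Ht : quad b d (quad_root_max b d) = 0) by (apply quad_root_max_root; lra).
  set (t := quad_root_max b d) in *.
  assert (Hv : 0 < 2 * t - b).
  { unfold t, quad_root_max; pose proof (sqrt_lt_R0 _ HD); lra. }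
  pose proof (quad_sub b d t c); pose proof (quad_sub b d u t).
  assert (Hct : c < t) by nra.
  assert (0 < t + c - b) by nra.
  split; nra.
Qed.

Lemma pos_part_nonpos x : x <= 0 -> pos_part x = 0.
Proof. intros; unfold pos_part; apply Rmax_left; lra. Qed.

Lemma pos_part_nonneg x : 0 <= x -> pos_part x = x.
Proof. intros; unfold pos_part; apply Rmax_right; lra. Qed.

Lemma Ttreat_le r CI Is : Is <= CI -> Ttreat r CI Is = r * Is.
Proof.
  intros; unfold Ttreat; destruct (Rlt_dec Is CI); [lra|].
  replace Is with CI by lra; reflexivity.
Qed.

Lemma Ttreat_ge r CI Is : CI <= Is -> Ttreat r CI Is = r * CI.
Proof. intros; unfold Ttreat; destruct (Rlt_dec Is CI); lra. Qed.

Lemma rhs_S_add_rhs_Im A sm ss mu rho beta CI S Im Is :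
  rhs_S A sm ss mu CI S Im Is + rhs_Im sm ss mu rho beta CI S Im Is
  = A - mu * S - (mu + rho + beta) * Im.
Proof. unfold rhs_S, rhs_Im; ring. Qed.

Definition sat_level (sm mu beta r CI : R) : R := sm * (mu + r) / (mu * beta) * CI.

Ltac prove_pos :=
  repeat first [ lra | apply Rdiv_lt_0_compat | apply Rmult_lt_0_compat
               | apply Rplus_lt_0_compat | apply pow_lt ].

Ltac solve_nonzero := repeat split; apply Rgt_not_eq; prove_pos.

Section Equilibria.

Variables A sm ss mu rho beta r CI : R.
Hypotheses (Hsm : 0 < sm) (Hss : 0 < ss) (Hmu : 0 < mu) (Hrho : 0 < rho)
  (Hbeta : 0 < beta) (Hr : 0 < r) (HCI : 0 < CI).

Local Notation R0 := (Rzero A sm mu rho beta).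
Local Notation p := (pp sm ss mu beta r CI).
Local Notation q := (qq sm ss mu beta).
Local Notation c := (sat_level sm mu beta r CI).
Local Notation sat_quad t := (quad (R0 + p - q) (p * R0) t).
Local Notation endemic := (endemic_eq A sm ss mu rho beta r CI).

Lemma sat_level_pos : 0 < c.
Proof. unfold sat_level; prove_pos. Qed.

Lemma qq_pos : 0 < q.
Proof. unfold qq; prove_pos. Qed.

Lemma pp_eq_sat_level : p = c * (1 - q).
Proof. unfold pp, qq, sat_level; field; solve_nonzero. Qed.

Lemma qq_sat_level_ge1 : beta ^ 2 * ss / ((mu + r) * sm ^ 2) <= CI -> 1 <= q * (1 + c).
Proof.
  intros HC.
  assert (0 < (mu + r) * sm ^ 2 / (beta * (mu * sm + beta * ss))) by prove_pos.
  assert (q * (1 + c) - 1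
          = (CI - beta ^ 2 * ss / ((mu + r) * sm ^ 2))
            * ((mu + r) * sm ^ 2 / (beta * (mu * sm + beta * ss)))).
  { unfold qq, sat_level; field; solve_nonzero. }
  nra.
Qed.

Lemma sat_quad_at_level : sat_quad c = c * q * (c + 1 - R0).
Proof. unfold quad; rewrite pp_eq_sat_level; ring. Qed.

Lemma sat_quad_at_R0 : sat_quad R0 = q * R0.
Proof. unfold quad; ring. Qed.

Lemma discS_sat_quad : discS A sm ss mu rho beta r CI = (R0 + p - q) ^ 2 - 4 * (p * R0).
Proof. unfold discS; ring. Qed.

Definition sat_S (t : R) : R := (mu + beta + rho) * (R0 - t) / sm.
Definition sat_Im (t : R) : R := mu * t / sm.
Definition sat_Is (t : R) : R := beta * t / sm - r * CI / mu.
Definition sat_point (t : R) : R * R * R := (sat_S t, sat_Im t, sat_Is t).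

Lemma sat_Is_eq t : sat_Is t = CI + beta / sm * (t - c).
Proof. unfold sat_Is, sat_level; field; solve_nonzero. Qed.

Lemma sat_Is_ge t : c <= t -> CI <= sat_Is t.
Proof.
  intros Ht; rewrite sat_Is_eq.
  assert (0 < beta / sm) by prove_pos.
  assert (0 <= beta / sm * (t - c)) by (apply Rmult_le_pos; lra).
  lra.
Qed.

Lemma sat_point_balance t : A - mu * sat_S t - (mu + rho + beta) * sat_Im t = 0.
Proof. unfold sat_S, sat_Im, Rzero; field; solve_nonzero. Qed.

Lemma rhs_Im_sat_point t :
  c <= t ->
  rhs_Im sm ss mu rho beta CI (sat_S t) (sat_Im t) (sat_Is t)
  = - ((mu + beta + rho) * (mu * sm + beta * ss) / sm ^ 2) * sat_quad t.
Proof.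
  intros Ht; unfold rhs_Im; rewrite pos_part_nonneg by (pose proof (sat_Is_ge t Ht); lra).
  unfold sat_S, sat_Im, sat_Is, quad, pp, qq, Rzero; field; solve_nonzero.
Qed.

Lemma rhs_Is_sat_point t : c <= t -> rhs_Is mu beta r CI (sat_Im t) (sat_Is t) = 0.
Proof.
  intros Ht; unfold rhs_Is; rewrite Ttreat_ge by (apply sat_Is_ge; exact Ht).
  unfold sat_Im, sat_Is; field; solve_nonzero.
Qed.

Lemma sat_point_endemic t : c <= t -> t < R0 -> sat_quad t = 0 -> endemic (sat_point t).
Proof.
  intros Hct HtR Hq.
  pose proof sat_level_pos; pose proof (sat_Is_ge t Hct).
  pose proof (rhs_Im_sat_point t Hct) as HIm; rewrite Hq, Rmult_0_r in HIm.
  pose proof (rhs_S_add_rhs_Im A sm ss mu rho beta CI (sat_S t) (sat_Im t) (sat_Is t)).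
  pose proof (sat_point_balance t).
  unfold endemic_eq, sat_point.
  repeat split; try lra; try (apply rhs_Is_sat_point; exact Hct).
  - unfold sat_S; prove_pos.
  - unfold sat_Im; prove_pos.
Qed.

Lemma endemic_sat_param Sv Im Is :
  endemic (Sv, Im, Is) -> CI < Is ->
  exists t, (Sv, Im, Is) = sat_point t /\ c < t /\ sat_quad t = 0.
Proof.
  intros (HS & HIm & HIs & ES & EIm & EIs) Hsat.
  set (t := R0 - sm * Sv / (mu + beta + rho)).
  assert (HSv : Sv = sat_S t) by (unfold sat_S, t; field; solve_nonzero).
  assert (HImv : Im = sat_Im t).
  { pose proof (rhs_S_add_rhs_Im A sm ss mu rho beta CI Sv Im Is).
    pose proof (sat_point_balance t); rewrite <- HSv in *.
    apply (Rmult_eq_reg_l (mu + rho + beta)); lra. }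
  assert (HIsv : Is = sat_Is t).
  { unfold rhs_Is in EIs; rewrite Ttreat_ge in EIs by lra.
    apply (Rmult_eq_reg_l mu); [|lra].
    rewrite HImv in EIs; unfold sat_Im, sat_Is in *.
    replace (mu * (beta * t / sm - r * CI / mu)) with (beta * (mu * t / sm) - r * CI)
      by (field; solve_nonzero).
    lra. }
  assert (Hct : c < t).
  { rewrite HIsv, sat_Is_eq in Hsat.
    assert (0 < beta / sm * (t - c)) by lra.
    assert (0 < beta / sm) by prove_pos.
    nra. }
  exists t; split; [unfold sat_point; congruence|split; [exact Hct|]].
  pose proof (rhs_Im_sat_point t (Rlt_le _ _ Hct)) as HIm'.
  rewrite <- HSv, <- HImv, <- HIsv, EIm in HIm'.
  assert (0 < (mu + beta + rho) * (mu * sm + beta * ss) / sm ^ 2) by prove_pos.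
  nra.
Qed.

Lemma endemic_unsat_eq_Estar Sv Im Is :
  endemic (Sv, Im, Is) -> Is <= CI -> (Sv, Im, Is) = Estar A sm mu rho beta r.
Proof.
  intros (HS & HIm & HIs & ES & EIm & EIs) Hunsat.
  unfold rhs_S, rhs_Im, rhs_Is in *.
  rewrite pos_part_nonpos in ES, EIm by lra; rewrite Ttreat_le in EIs by lra.
  assert (HSv : Sv = (mu + beta + rho) / sm).
  { assert (Hfac : Im * (sm * Sv - (mu + rho + beta)) = 0) by lra.
    destruct (Rmult_integral _ _ Hfac); [lra|].
    apply (Rmult_eq_reg_l sm); [|lra]; field_simplify; lra. }
  subst Sv.
  assert (HImv : Im = mu * (R0 - 1) / sm).
  { apply (Rmult_eq_reg_l (mu + beta + rho)); [|lra].
    replace (sm * ((mu + beta + rho) / sm)) with (mu + beta + rho) in ES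
      by (field; solve_nonzero).
    transitivity (A - mu * ((mu + beta + rho) / sm)); [lra|].
    unfold Rzero; field; solve_nonzero. }
  subst Im.
  unfold Estar; f_equal.
  apply (Rmult_eq_reg_l (mu + r)); [|lra].
  transitivity (beta * (mu * (R0 - 1) / sm)); [lra|field; solve_nonzero].
Qed.

Lemma Estar_Is : snd (Estar A sm mu rho beta r)
                 = CI + mu * beta / (sm * (mu + r)) * (R0 - (1 + c)).
Proof. unfold Estar, sat_level; simpl; field; solve_nonzero. Qed.

Lemma Estar_endemic : 1 < R0 -> R0 <= 1 + c -> endemic (Estar A sm mu rho beta r).
Proof.
  intros HR1 HR2.
  assert (0 < mu * beta / (sm * (mu + r))) by prove_pos.
  assert (HIs : mu * beta * (R0 - 1) / (sm * (mu + r)) <= CI).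
  { pose proof Estar_Is as HE; simpl in HE; rewrite HE; nra. }
  unfold endemic_eq, Estar, rhs_S, rhs_Im, rhs_Is.
  rewrite pos_part_nonpos by lra; rewrite Ttreat_le by lra.
  repeat split.
  1-3: prove_pos.
  - unfold Rzero; field; solve_nonzero.
  - field; solve_nonzero.
  - field; solve_nonzero.
Qed.

Lemma E1star_sat_point :
  E1star A sm ss mu rho beta r CI = sat_point (quad_root_max (R0 + p - q) (p * R0)).
Proof.
  unfold E1star, S1star, sat_point, sat_S, sat_Im, sat_Is, quad_root_max.
  rewrite discS_sat_quad.
  f_equal; [f_equal|]; field; solve_nonzero.
Qed.

Lemma endemic_unique_below :
  beta ^ 2 * ss / ((mu + r) * sm ^ 2) <= CI -> 1 < R0 <= 1 + c ->
  endemic (Estar A sm mu rho beta r) /\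
  forall E, endemic E -> E = Estar A sm mu rho beta r.
Proof.
  intros HC [HR1 HR2]; split; [exact (Estar_endemic HR1 HR2)|].
  intros [[Sv Im] Is] HE.
  destruct (Rle_or_lt Is CI) as [Hunsat|Hsat].
  { exact (endemic_unsat_eq_Estar _ _ _ HE Hunsat). }
  destruct (endemic_sat_param _ _ _ HE Hsat) as (t & _ & Hct & Hq).
  exfalso; apply (Rlt_not_le _ _ Hct).
  pose proof sat_level_pos; pose proof qq_pos; pose proof (qq_sat_level_ge1 HC).
  apply (quad_root_le (R0 + p - q) (p * R0)); [|rewrite sat_quad_at_level|exact Hq].
  - rewrite pp_eq_sat_level; nra.
  - apply Rmult_le_pos; [apply Rmult_le_pos|]; lra.
Qed.

Lemma endemic_unique_above :
  R0 > 1 + c ->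
  0 <= discS A sm ss mu rho beta r CI /\
  endemic (E1star A sm ss mu rho beta r CI) /\
  snd (E1star A sm ss mu rho beta r CI) > CI /\
  forall E, endemic E -> E = E1star A sm ss mu rho beta r CI.
Proof.
  intros HR.
  pose proof sat_level_pos; pose proof qq_pos.
  assert (Hneg : sat_quad c < 0).
  { rewrite sat_quad_at_level.
    assert (0 < c * q) by nra; nra. }
  assert (Hpos : 0 < sat_quad R0) by (rewrite sat_quad_at_R0; nra).
  destruct (quad_root_max_between _ _ c R0 ltac:(lra) Hneg Hpos) as [Hc1 HR1].
  pose proof (quad_discr_pos _ _ _ Hneg) as HD.
  rewrite discS_sat_quad, E1star_sat_point.
  split; [lra|split; [|split]].
  - apply sat_point_endemic; [lra|lra|].
    apply quad_root_max_root; lra.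
  - simpl; rewrite sat_Is_eq.
    assert (0 < beta / sm) by prove_pos; nra.
  - intros [[Sv Im] Is] HE.
    destruct (Rle_or_lt Is CI) as [Hunsat|Hsat].
    + exfalso.
      pose proof (f_equal snd (endemic_unsat_eq_Estar _ _ _ HE Hunsat)) as HIs.
      rewrite Estar_Is in HIs; simpl in HIs.
      assert (0 < mu * beta / (sm * (mu + r))) by prove_pos.
      nra.
    + destruct (endemic_sat_param _ _ _ HE Hsat) as (t & -> & Hct & Hq).
      f_equal; apply (quad_root_ge_eq_max _ _ c); [exact Hneg|exact Hq|lra].
Qed.

End Equilibria.

Theorem theorem2p1 (A sm ss mu rho beta r CI : R) :
  0 < A -> 0 < sm -> 0 < ss -> 0 < mu -> 0 < rho -> 0 < beta -> 0 < r -> 0 < CI ->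
  Rzero A sm mu rho beta > sm * (mu + r) * CI / (mu * beta) ->
  beta ^ 2 * ss / ((mu + r) * sm ^ 2) <= CI ->
  ((1 < Rzero A sm mu rho beta <= 1 + sm * (mu + r) / (mu * beta) * CI ->
    endemic_eq A sm ss mu rho beta r CI (Estar A sm mu rho beta r) /\
    forall E, endemic_eq A sm ss mu rho beta r CI E -> E = Estar A sm mu rho beta r)
   /\
   (Rzero A sm mu rho beta > 1 + sm * (mu + r) / (mu * beta) * CI ->
    0 <= discS A sm ss mu rho beta r CI /\
    endemic_eq A sm ss mu rho beta r CI (E1star A sm ss mu rho beta r CI) /\
    snd (E1star A sm ss mu rho beta r CI) > CI /\
    forall E, endemic_eq A sm ss mu rho beta r CI E ->
      E = E1star A sm ss mu rho beta r CI)).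
Proof.
  intros _ Hsm Hss Hmu Hrho Hbeta Hr HCI _ HC.
  split; [apply endemic_unique_below | apply endemic_unique_above]; assumption.
Qed.
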